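(* Fix a start node $s\in V$ and let $\ell_a,\ell_b$ be two labels with start node $s$ whose node sets do not contain $s$ (i.e. not fully extended), such that $v(\ell_a)=v(\ell_b)$ and $$\bar c(\ell_a)\le \bar c(\ell_b),\qquad t(\ell_a)\le t(\ell_b),\qquad \mathscr N(\ell_a)\subseteq \mathscr N(\ell_b).$$ Then $\ell_a$ dominates $\ell_b$ in the following sense: for every finite sequence of nodes $j_1,\dots,j_m$ with $j_m=s$ such that successively extending $\ell_b$ by $j_1,\dots,j_m$ is a valid sequence of extensions producing a fully-extended label $\ell_b^*$ with $t(\ell_b^* )\le q(\ell_b^* )$ (a length-feasible cycle), successively extending $\ell_a$ by $j_1,\dots,j_m$ is also a valid sequence of extensions, and the resulting fully-extended label $\ell_a^*$ satisfies $t(\ell_a^* )\le q(\ell_a^* )$ and $\bar c(\ell_a^* )\le \bar c(\ell_b^* )$.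
   Context: $G=(V,E)$ is an undirected graph with a critical time $q_i>0$ for each node $i\in V$, a travel time $t_{i,j}=t_{j,i}\ge 0$ for each edge $\{i,j\}\in E$, and a weight $\pi_i\in\mathbb R$ for each node (no sign restriction). Fix a start node $s\in V$. A label represents a path $P=(i_0,i_1,\dots,i_K)$ in $G$ with $i_0=s$ and is the tuple $\ell=(\mathscr N,v,\bar c,t,q)$ with $\mathscr N(\ell)=\{i_1,\dots,i_K\}$, $v(\ell)=i_K$, $\bar c(\ell)=1-\sum_{i\in\mathscr N(\ell)}\pi_i$, $t(\ell)=\sum_{k=1}^K t_{i_{k-1},i_k}$, $q(\ell)=\min_{k=0,\dots,K} q_{i_k}$. The initial label is $\ell_s=(\emptyset,s,1,0,q_s)$. A label $\ell$ may be extended by a node $j\in V\setminus\mathscr N(\ell)$ with $\{v(\ell),j\}\in E$, giving the label $\ell^+$ with $\mathscr N(\ell^+)=\mathscr N(\ell)\cup\{j\}$, $v(\ell^+)=j$, $\bar c(\ell^+)=\bar c(\ell)-\pi_j$, $t(\ell^+)=t(\ell)+t_{v(\ell),j}$, $q(\ell^+)=\min\{q(\ell),q_j\}$. A label $\ell\neq\ell_s$ is fully extended if $v(\ell)=s$; it then represents a cycle, whose reduced cost is $\bar c(\ell)$ and which is length-feasible iff $t(\ell)\le q(\ell)$. *)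

From mathcomp Require Import all_boot all_order all_algebra.
Set Implicit Arguments. Unset Strict Implicit. Unset Printing Implicit Defensive.
Import Order.TTheory GRing.Theory Num.Theory.
Local Open Scope ring_scope.

Record label (V : finType) (R : Type) := Label {
  lN : {set V}; lv : V; lc : R; lt : R; lq : R }.

Section Labels.
Variables (V : finType) (R : realFieldType).
Variables (E : rel V) (tt : V -> V -> R) (qc : V -> R) (pi : V -> R) (s : V).

Fixpoint travel (x : V) (P : seq V) : R :=
  match P with
  | [::] => 0
  | y :: P' => tt x y + travel y P'
  end.

(* The label of the path (s, i_1, ..., i_K), where P = [:: i_1; ...; i_K]. *)
Definition label_of_path (P : seq V) : label V R :=
  Label [set x in P] (last s P)
        (1 - \sum_(i in [set x in P]) pi i)
        (travel s P)
        (foldr (fun i m => Num.min (qc i) m) (qc s) P).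

Definition represents (l : label V R) : Prop :=
  exists P : seq V, path E s P /\ l = label_of_path P.

Definition extend (l : label V R) (j : V) : option (label V R) :=
  if (j \notin lN l) && E (lv l) j then
    Some (Label (j |: lN l) j (lc l - pi j) (lt l + tt (lv l) j)
                (Num.min (lq l) (qc j)))
  else None.

Definition extend_seq (l : label V R) (js : seq V) : option (label V R) :=
  foldl (fun ol j => obind (fun l' => extend l' j) ol) (Some l) js.

End Labels.

From mathcomp Require Import all_boot all_order all_algebra.
Set Implicit Arguments.
Unset Strict Implicit.
Unset Printing Implicit Defensive.
Import Order.TTheory GRing.Theory Num.Theory.
Local Open Scope ring_scope.

(* Dominance is an invariant of extension once it also records that [lb] has
   the smaller critical time: every extension adds the same node, travel time
   and weight to both labels and takes the same minimum on [q]. For labels of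
   paths from [s], [q] is the minimum of [qc] over [s] and the node set, so
   [N(la) \subset N(lb)] yields the missing inequality [q(lb) <= q(la)]. *)

Section Dominance.
Variables (V : finType) (R : realFieldType).
Variables (E : rel V) (tt : V -> V -> R) (qc : V -> R) (pi : V -> R).

Definition dominates (la lb : label V R) :=
  [/\ lN la \subset lN lb, lv la = lv lb, lc la <= lc lb, lt la <= lt lb
    & lq lb <= lq la].

Lemma extend_seq_cons l j js :
  extend_seq E tt qc pi l (j :: js) =
  obind (fun l' => extend_seq E tt qc pi l' js) (extend E tt qc pi l j).
Proof.
rewrite /extend_seq /=; case: (extend E tt qc pi l j) => //=.
by elim: js.
Qed.

Lemma dominates_extend la lb j lb' :
  dominates la lb -> extend E tt qc pi lb j = Some lb' ->
  exists2 la', extend E tt qc pi la j = Some la' & dominates la' lb'.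
Proof.
case=> sN ev ec et eq; rewrite /extend.
case: ifP => // /andP[jNb ej] [<-].
have jNa : j \notin lN la by apply: contra jNb; apply: (subsetP sN).
rewrite jNa ev ej; eexists; first by [].
split=> /=; rewrite ?lerD2r //; first exact: setUS.
by rewrite le_min !ge_min eq lexx !orbT.
Qed.

Lemma dominates_extend_seq js la lb lbs :
  dominates la lb -> extend_seq E tt qc pi lb js = Some lbs ->
  exists2 las, extend_seq E tt qc pi la js = Some las & dominates las lbs.
Proof.
elim: js la lb => [|j js IH] la lb dom_ab; first by move=> [<-]; exists la.
rewrite !extend_seq_cons.
case Eb: (extend E tt qc pi lb j) => [lb'|] //= Ebs.
have [la' -> dom_ab'] := dominates_extend dom_ab Eb.
exact: IH _ _ dom_ab' Ebs.
Qed.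

Lemma le_lq_label_of_path s P m :
  (m <= lq (label_of_path tt qc pi s P)) =
  (m <= qc s) && all (fun x => m <= qc x) P.
Proof.
rewrite /=; elim: P => [|y P IH] /=; first by rewrite andbT.
by rewrite le_min IH andbCA.
Qed.

Lemma lq_label_of_path_subset s Pa Pb : {subset Pa <= Pb} ->
  lq (label_of_path tt qc pi s Pb) <= lq (label_of_path tt qc pi s Pa).
Proof.
move=> sPab; have := lexx (lq (label_of_path tt qc pi s Pb)).
rewrite !le_lq_label_of_path => /andP[-> /allP qPb] /=.
by apply/allP => x /sPab; apply: qPb.
Qed.

Lemma dominates_label_of_path s Pa Pb :
  let la := label_of_path tt qc pi s Pa in
  let lb := label_of_path tt qc pi s Pb in
  lv la = lv lb -> lc la <= lc lb -> lt la <= lt lb -> lN la \subset lN lb ->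
  dominates la lb.
Proof.
move=> la lb ev ec et sN; split=> //; apply: lq_label_of_path_subset => x xPa.
by have := subsetP sN x; rewrite !inE; apply.
Qed.

End Dominance.

Theorem lemma1 (V : finType) (R : realFieldType)
  (E : rel V) (tt : V -> V -> R) (qc : V -> R) (pi : V -> R)
  (E_sym : symmetric E) (E_irr : irreflexive E)
  (tt_sym : forall i j, tt i j = tt j i)
  (tt_ge0 : forall i j, 0 <= tt i j)
  (qc_gt0 : forall i, 0 < qc i)
  (s : V) (la lb : label V R) :
  represents E tt qc pi s la -> represents E tt qc pi s lb ->
  s \notin lN la -> s \notin lN lb ->
  lv la = lv lb ->
  lc la <= lc lb -> lt la <= lt lb -> lN la \subset lN lb ->
  forall (js : seq V) (lbs : label V R),
    js != [::] -> last s js = s ->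
    extend_seq E tt qc pi lb js = Some lbs ->
    lt lbs <= lq lbs ->
    exists las : label V R,
      [/\ extend_seq E tt qc pi la js = Some las,
          lt las <= lq las &
          lc las <= lc lbs].
Proof.
move=> [Pa [_ ->]] [Pb [_ ->]] _ _ ev ec et sN js lbs _ _ Ebs feas_b.
have dom_ab := dominates_label_of_path ev ec et sN.
have [las Eas [_ _ ec' et' eq']] := dominates_extend_seq dom_ab Ebs.
exists las; split=> //.
exact: le_trans et' (le_trans feas_b eq').
Qed.
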